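(* Let $p\ge 2$ be an integer. For every integer $n\ge 10^{p-1}+9$ and all $a,b\in\{0,\dots,9\}$ with $a<b$, we have $P_{(a,n,p)}>P_{(b,n,p)}$.
   Context: For an integer $x\ge 10^{p-1}$, the ''$p$-th digit of $x$'' is the $p$-th digit of its decimal expansion counted from the left. For $d\in\{0,\dots,9\}$ and $m\ge 10^{p-1}$, let $N_d(m)$ be the number of integers $x$ with $10^{p-1}\le x\le m$ whose $p$-th digit is $d$. For $n\ge 10^{p-1}$, $$P_{(d,n,p)}=\frac{1}{n+1-10^{p-1}}\sum_{m=10^{p-1}}^{n}\frac{N_d(m)}{m+1-10^{p-1}},$$ which is the probability that the $p$-th digit of $x$ is $d$ when $m$ is chosen uniformly in $\{10^{p-1},\dots,n\}$ and then $x$ uniformly in $\{10^{p-1},\dots,m\}$. *)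

From mathcomp Require Import all_boot all_order all_algebra.
Set Implicit Arguments. Unset Strict Implicit. Unset Printing Implicit Defensive.
Import Order.TTheory GRing.Theory Num.Theory.

(* Number of decimal digits of x > 0 is trunc_log 10 x + 1.
   The p-th digit of x counted from the left (for x >= 10^(p-1)):
   drop the last (ndigits x - p) digits and take the units digit. *)
Definition ndigits (x : nat) : nat := (trunc_log 10 x).+1.

Definition pth_digit (p x : nat) : nat :=
  (x %/ 10 ^ (ndigits x - p)) %% 10.

Definition Ncount (p d m : nat) : nat :=
  \sum_(10 ^ p.-1 <= x < m.+1) (pth_digit p x == d).

Definition Pdigit (d n p : nat) : rat :=
  ((n.+1 - 10 ^ p.-1)%:R)^-1 *
  \sum_(10 ^ p.-1 <= m < n.+1) ((Ncount p d m)%:R / (m.+1 - 10 ^ p.-1)%:R).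

From mathcomp Require Import all_boot all_order all_algebra zify.
Import Order.TTheory GRing.Theory Num.Theory.

Set Implicit Arguments.
Unset Strict Implicit.
Unset Printing Implicit Defensive.

(* Subtracting [b - a] at the p-th position maps the numbers with p-th digit [b]
   injectively to smaller numbers with the same number of digits and p-th digit
   [a] (for p >= 2 the leading digit is untouched).  Hence N_b(m) <= N_a(m) for
   every m, and the inequality is strict at m = 10^(p-1) + a, where only the
   digits 0, ..., a have occurred.  Averaging over m gives the claim. *)

Lemma ndigits_mulD p q s r : 0 < p -> 10 ^ p.-1 <= q < 10 ^ p -> r < 10 ^ s ->
  ndigits (q * 10 ^ s + r) = p + s.
Proof.
move=> p_gt0 /andP[q_ge q_lt] r_lt.
have -> : p + s = (p.-1 + s).+1 by lia.
rewrite /ndigits (@trunc_log_eq _ (p.-1 + s)) // expnS expnD.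
rewrite -(prednK p_gt0) expnS in q_lt.
nia.
Qed.

Lemma pth_digit_mulD p q s r : 0 < p -> 10 ^ p.-1 <= q < 10 ^ p -> r < 10 ^ s ->
  pth_digit p (q * 10 ^ s + r) = q %% 10.
Proof.
move=> p_gt0 q_bd r_lt; rewrite /pth_digit (ndigits_mulD p_gt0 q_bd r_lt) addKn.
by rewrite divnMDl ?expn_gt0 // divn_small // addn0.
Qed.

Lemma divn_ndigits_bounds p x : 0 < p -> 10 ^ p.-1 <= x ->
  10 ^ p.-1 <= x %/ 10 ^ (ndigits x - p) < 10 ^ p.
Proof.
move=> p_gt0 x_ge; have x_gt0 : 0 < x by rewrite (leq_trans _ x_ge) ?expn_gt0.
have /andP[lo hi] := trunc_log_bounds (isT : 1 < 10) x_gt0.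
have k_ge : p.-1 <= trunc_log 10 x by apply: trunc_log_max.
rewrite /ndigits; set k := trunc_log 10 x in lo hi k_ge *.
have -> : k.+1 - p = k - p.-1 by lia.
have e_gt0 : 0 < 10 ^ (k - p.-1) by rewrite expn_gt0.
rewrite leq_divRL // ltn_divLR // -!expnD.
have -> : p.-1 + (k - p.-1) = k by lia.
have -> : p + (k - p.-1) = k.+1 by lia.
by rewrite lo hi.
Qed.

Lemma subn_last_digit p q k : 1 < p -> 10 ^ p.-1 <= q < 10 ^ p -> k <= q %% 10 ->
  10 ^ p.-1 <= q - k < 10 ^ p /\ (q - k) %% 10 = q %% 10 - k.
Proof.
move=> p_gt1; have -> : 10 ^ p = 10 * 10 ^ p.-1 by rewrite -expnS prednK // ltnW.
have -> : 10 ^ p.-1 = 10 * 10 ^ p.-2 by rewrite -expnS; congr (_ ^ _); lia.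
lia.
Qed.

Definition lower_digit (p k x : nat) : nat := x - k * 10 ^ (ndigits x - p).

Lemma lower_digitP p k x : 1 < p -> 10 ^ p.-1 <= x -> k <= pth_digit p x ->
  let y := lower_digit p k x in
  [/\ ndigits y = ndigits x, pth_digit p y = pth_digit p x - k,
      10 ^ p.-1 <= y & y + k * 10 ^ (ndigits x - p) = x].
Proof.
move=> p_gt1 x_ge k_le y; have p_gt0 : 0 < p by apply: ltnW.
have q_bd := divn_ndigits_bounds p_gt0 x_ge.
set s := ndigits x - p in q_bd *; set q := x %/ 10 ^ s in q_bd k_le.
have r_lt : x %% 10 ^ s < 10 ^ s by rewrite ltn_mod expn_gt0.
have xE : x = q * 10 ^ s + x %% 10 ^ s by apply: divn_eq.
have [q'_bd q'_digit] := subn_last_digit p_gt1 q_bd k_le.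
have kq : k * 10 ^ s <= q * 10 ^ s.
  by rewrite leq_mul2r (leq_trans k_le) ?leq_mod ?orbT.
have yE : y = (q - k) * 10 ^ s + x %% 10 ^ s.
  by rewrite /y /lower_digit -/s mulnBl; lia.
have nx : ndigits x = p + s by rewrite {1}xE (ndigits_mulD p_gt0 q_bd r_lt).
rewrite yE (ndigits_mulD p_gt0 q'_bd r_lt) (pth_digit_mulD p_gt0 q'_bd r_lt) -/s -nx.
have e_gt0 : 0 < 10 ^ s by rewrite expn_gt0.
split => //; last by rewrite mulnBl; lia.
have [q'_ge _] := andP q'_bd.
by rewrite (leq_trans q'_ge) // (leq_trans (leq_pmulr _ e_gt0)) ?leq_addr.
Qed.

Lemma lower_digit_inj p k : 1 < p ->
  {in [pred x | (10 ^ p.-1 <= x) && (k <= pth_digit p x)] &,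
    injective (lower_digit p k)}.
Proof.
move=> p_gt1 x y /andP[x_ge kx] /andP[y_ge ky] exy.
have [nx _ _ xE] := lower_digitP p_gt1 x_ge kx.
have [ny _ _ yE] := lower_digitP p_gt1 y_ge ky.
by rewrite -xE -yE -nx -ny exy.
Qed.

Lemma sum_nat_of_bool (T : Type) (s : seq T) (P : pred T) :
  \sum_(i <- s) (P i : nat) = count P s.
Proof. by elim: s => [|x s IHs]; rewrite ?big_nil ?big_cons //= IHs. Qed.

Lemma leq_count_in_inj (T : eqType) (s : seq T) (P Q : pred T) (f : T -> T) :
  uniq s -> {in [pred x in s | P x] &, injective f} ->
  {in [pred x in s | P x], forall x, (f x \in s) && Q (f x)} ->
  count P s <= count Q s.
Proof.
move=> s_uniq f_inj f_to; rewrite -!size_filter -(size_map f).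
apply: uniq_leq_size.
  rewrite map_inj_in_uniq ?filter_uniq // => x y.
  by rewrite !mem_filter => /andP[Px xs] /andP[Py ys]; apply: f_inj; rewrite inE ?xs ?ys.
move=> y /mapP[x]; rewrite mem_filter => /andP[Px xs] ->.
have /andP[fxs Qfx] : (f x \in s) && Q (f x) by apply: f_to; rewrite inE xs.
by rewrite mem_filter Qfx.
Qed.

Lemma Ncount_antimono p a b m : 1 < p -> a <= b -> Ncount p b m <= Ncount p a m.
Proof.
move=> p_gt1 ab; rewrite /Ncount !sum_nat_of_bool.
apply: (@leq_count_in_inj _ _ _ _ (lower_digit p (b - a))); first exact: iota_uniq.
  move=> x y; rewrite !inE !mem_index_iota => /andP[/andP[x_ge _] /eqP xb].
  move=> /andP[/andP[y_ge _] /eqP yb]; apply: (lower_digit_inj p_gt1).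
    by rewrite inE x_ge xb leq_subr.
  by rewrite inE y_ge yb leq_subr.
move=> x; rewrite inE mem_index_iota => /andP[/andP[x_ge x_lt] /eqP xb].
have ba_le : b - a <= pth_digit p x by rewrite xb leq_subr.
have [_ digit_y y_ge yE] := lower_digitP p_gt1 x_ge ba_le.
rewrite mem_index_iota y_ge digit_y xb subKn // eqxx andbT /=.
by rewrite (leq_ltn_trans _ x_lt) // -{2}yE leq_addr.
Qed.

Lemma pth_digit_first p j : 1 < p -> j < 10 -> pth_digit p (10 ^ p.-1 + j) = j.
Proof.
move=> p_gt1 j_lt; have p_gt0 : 0 < p by apply: ltnW.
have L_10 : 10 ^ p.-1 = 10 * 10 ^ p.-2 by rewrite -expnS; congr (_ ^ _); lia.
have L_bd : 10 ^ p.-1 <= 10 ^ p.-1 + j < 10 ^ p.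
  by rewrite -(prednK p_gt0) expnS /= L_10; lia.
have := pth_digit_mulD p_gt0 L_bd (isT : 0 < 10 ^ 0).
by rewrite expn0 muln1 addn0 => ->; rewrite L_10; lia.
Qed.

Lemma Ncount_first p d j : 1 < p -> j < 10 ->
  Ncount p d (10 ^ p.-1 + j) = (d <= j).
Proof.
move=> p_gt1 j_lt; rewrite /Ncount sum_nat_of_bool /index_iota.
have -> : (10 ^ p.-1 + j).+1 - 10 ^ p.-1 = j.+1 by lia.
rewrite -[10 ^ p.-1]addn0 iotaDl count_map (@eq_in_count _ _ (pred1 d)).
  by rewrite count_uniq_mem ?iota_uniq // mem_iota.
by move=> i; rewrite mem_iota /= => i_lt; rewrite pth_digit_first //; lia.
Qed.

Lemma ler_lt_sum (R : numDomainType) (I : eqType) (r : seq I) (F G : I -> R) i0 :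
  uniq r -> i0 \in r -> {in r, forall i, F i <= G i}%R -> (F i0 < G i0)%R ->
  (\sum_(i <- r) F i < \sum_(i <- r) G i)%R.
Proof.
move=> r_uniq i0r FG FG0; rewrite (bigD1_seq i0) // [X in (_ < X)%R](bigD1_seq i0) //=.
apply: ltr_leD => //.
rewrite big_seq_cond [X in (_ <= X)%R]big_seq_cond.
by apply: ler_sum => i /andP[ir _]; apply: FG.
Qed.

Theorem proposition3 (p : nat) (hp : (2 <= p)%N) (n : nat)
  (hn : (10 ^ p.-1 + 9 <= n)%N) (a b : nat) (hab : (a < b)%N) (hb : (b <= 9)%N) :
  (Pdigit b n p < Pdigit a n p)%R.
Proof.
set L := 10 ^ p.-1 in hn.
have weight_gt0 m : L <= m -> (0 < ((m.+1 - L)%:R : rat)^-1)%R.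
  by move=> m_ge; rewrite invr_gt0 ltr0n subn_gt0.
rewrite /Pdigit -/L ltr_pM2l; last by apply: weight_gt0; lia.
apply: (@ler_lt_sum _ _ _ _ _ (L + a)); first exact: iota_uniq.
- by rewrite mem_index_iota; lia.
- move=> m; rewrite mem_index_iota => /andP[m_ge _].
  by rewrite ler_pM2r ?weight_gt0 // ler_nat Ncount_antimono // ltnW.
- rewrite ltr_pM2r ?weight_gt0 ?leq_addr // ltr_nat !Ncount_first //; lia.
Qed.
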